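(* For any $S\subseteq V$ and any $S$-restricted tree cover $\mathcal{T}(S)$ of $G$, the number of vertices of $V$ that have pseudo-degree greater than $s$ in some tree of $\mathcal{T}(S)$ is at most $\frac{|S|}{2d^{c+1}}$, i.e. $|\mathrm{Hi}(\mathcal{T}(S))|\le \frac{|S|}{2d^{c+1}}$.
   Context: $G=(V,E)$ is an undirected graph with $n\ge 3$ vertices and positive real edge weights; $\delta(u,v)$ denotes the distance in $G$. Let $k=\ln n$. For $S\subseteq V$, an $S$-restricted tree cover of $G$ is a family $\{T(w):w\in S\}$ of trees, where $T(w)$ is a subtree of $G$ (with $G$'s edge weights) rooted at $w$, such that: (i) for every $u\in S$, $v\in V$ there is $w\in S$ with $u,v\in V(T(w))$ and $\mathrm{dep}_{T(w)}(u)+\mathrm{dep}_{T(w)}(v)\le(2k-1)\delta(u,v)$, where $\mathrm{dep}_T(x)$ is the weighted distance in $T$ from $x$ to the root; (ii) every vertex of $V$ lies in at most $kn^{1/k}(\ln n+1)\ (\le 2e\ln^2 n)$ trees of the family. For a tree $T$ of the family, a vertex $v\in V(T)$ is a trunk vertex if there are $u,w\in S$ such that $v$ lies on the path from $u$ to $w$ in $T$; $\mathrm{Trunk}(T)$ is the subtree of $T$ induced by its trunk vertices; the pseudo-degree $\mathrm{pdeg}_T(v)$ of $v\in V(T)$ is its degree in $\mathrm{Trunk}(T)$ (and $0$ if $v$ is not a trunk vertex). Fix an integer $d\ge 2$ and a constant $c\ge 1$, and let $s=4e\cdot d^{c+1}\ln^2 n+1$. $\mathrm{Hi}(\mathcal{T}(S))$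 is the set of vertices of $V$ having pseudo-degree $>s$ in some tree of $\mathcal{T}(S)$. *)

From HB Require Import structures.
From mathcomp Require Import all_boot all_order all_algebra.
From mathcomp Require Import boolp classical_sets reals ereal sequences exp.
Set Implicit Arguments. Unset Strict Implicit. Unset Printing Implicit Defensive.
Import Order.TTheory GRing.Theory Num.Theory.
Local Open Scope ring_scope.

(* An undirected weighted graph on a finite vertex type V is given by an edge
   set E : {set {set V}} (each edge an unordered pair {a,b}, a <> b) and a
   weight function wt on edges. *)

Section Graphs.
Variables (V : finType) (R : realType).

Definition is_graph (E : {set {set V}}) : Prop :=
  forall e, e \in E -> #|e| = 2%N.

Definition pos_weights (E : {set {set V}}) (wt : {set V} -> R) : Prop :=
  forall e, e \in E -> 0 < wt e.

Definition adjE (E : {set {set V}}) : rel V := fun a b => [set a; b] \in E.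

(* p is (the tail of) a walk in E from u to v: u :: p *)
Definition walk (E : {set {set V}}) (u v : V) (p : seq V) : bool :=
  path (adjE E) u p && (last u p == v).

Definition walk_weight (wt : {set V} -> R) (u : V) (p : seq V) : R :=
  \sum_(e <- pairmap (fun a b => [set a; b]) u p) wt e.

(* weighted distance in the graph with edge set E (+oo if disconnected) *)
Definition wdist (E : {set {set V}}) (wt : {set V} -> R) (u v : V) : \bar R :=
  ereal_inf [set (walk_weight wt u p)%:E | p in [set p | walk E u v p]].

Definition sub_connected (VT : {set V}) (ET : {set {set V}}) : Prop :=
  forall u v, u \in VT -> v \in VT -> exists p, walk ET u v p.

(* a cycle: closed walk u :: p with last p = u, at least 3 distinct vertices
   p, all distinct *)
Definition acyclic (ET : {set {set V}}) : Prop :=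
  forall (u : V) (p : seq V),
    walk ET u u p -> uniq p -> (size p < 3)%N.

Definition rooted_subtree (E : {set {set V}}) (VT : {set V})
    (ET : {set {set V}}) (r : V) : Prop :=
  [/\ r \in VT, ET \subset E, (forall e, e \in ET -> e \subset VT),
      sub_connected VT ET & acyclic ET].

Definition dep (ET : {set {set V}}) (wt : {set V} -> R) (r x : V) : \bar R :=
  wdist ET wt x r.

Definition trunk_vertex (S : {set V}) (ET : {set {set V}}) (v : V) : Prop :=
  exists a b p, [/\ a \in S, b \in S, walk ET a b p, uniq (a :: p)
                  & v \in a :: p].

Definition trunk (S : {set V}) (VT : {set V}) (ET : {set {set V}}) : {set V} :=
  [set v in VT | `[< trunk_vertex S ET v >]].

(* pseudo-degree: degree in Trunk(T), the subtree induced by the trunk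
   vertices; 0 for non-trunk vertices *)
Definition pdeg (S : {set V}) (VT : {set V}) (ET : {set {set V}}) (v : V) : nat :=
  if v \in trunk S VT ET then
    #|[set e in ET | (v \in e) && (e \subset trunk S VT ET)]|
  else 0%N.

Definition restricted_tree_cover (E : {set {set V}}) (wt : {set V} -> R)
    (S : {set V}) (VT : V -> {set V}) (ET : V -> {set {set V}}) : Prop :=
  let n := #|V|%:R : R in
  let k := ln n in
  [/\ (forall w, w \in S -> rooted_subtree E (VT w) (ET w) w),
      (forall u v, u \in S ->
         exists2 w, w \in S &
           [/\ u \in VT w, v \in VT w &
               (dep (ET w) wt w u + dep (ET w) wt w v <=
                  ((2 * k - 1)%:E * wdist E wt u v))%E])
    & (forall v, (#|[set w in S | v \in VT w]|%:R : R)
                   <= k * powR n k^-1 * (ln n + 1))].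

Definition Hi (S : {set V}) (VT : V -> {set V}) (ET : V -> {set {set V}})
    (s : R) : {set V} :=
  [set v | [exists w in S, s < (pdeg S (VT w) (ET w) v)%:R]].

End Graphs.

From HB Require Import structures.
From mathcomp Require Import all_boot all_order all_algebra.
From mathcomp Require Import boolp classical_sets reals ereal sequences exp.
From mathcomp Require Import zify lra.
Import Order.TTheory GRing.Theory Num.Theory.
Set Implicit Arguments. Unset Strict Implicit. Unset Printing Implicit Defensive.

(* In each tree T(w) of the cover, the edges of Trunk(T(w)) form a forest whose
   leaves lie in S: a trunk vertex outside S is interior to a tree path between
   two vertices of S, so it has two trunk edges.  A forest has at most as many
   edges as covered vertices and its degrees sum to twice the number of edges,
   hence the excesses (deg v - 2)^+ sum to at most the number of leaves.  So
   at most |S ∩ T(w)| / (s - 2) vertices have pseudo-degree > s in T(w).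
   Summing over w and counting the pairs (w, u), u ∈ S ∩ T(w), by u gives at
   most |S| k n^(1/k) (k + 1) = |S| k e (k + 1); only this load bound of the
   cover is used, not its stretch.  Finally s - 2 >= 2 d^(c+1) k e (k + 1) as
   soon as k >= ln 3 > 17/16. *)

Local Notation subsetP := fintype.subsetP.
Local Notation set0 := finset.set0.
Local Notation setUC := finset.setUC.
Local Notation cover := finset.cover.
Local Notation set0Pn := finset.set0Pn.
Local Notation bigcupP := finset.bigcupP.
Local Notation subUset := finset.subUset.
Local Notation sub1set := finset.sub1set.

Lemma sum_nat_of_bool (T : finType) (P Q : pred T) :
  \sum_(t | P t) (Q t : nat) = #|[set t | P t & Q t]|.
Proof. by rewrite -sum1dep_card big_mkcondr. Qed.

Lemma double_count (I J : finType) (P : pred I) (Q : pred J) (r : I -> J -> bool) :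
  \sum_(i | P i) #|[set j | Q j & r i j]| = \sum_(j | Q j) #|[set i | P i & r i j]|.
Proof.
under eq_bigr do rewrite -sum_nat_of_bool.
under [RHS]eq_bigr do rewrite -sum_nat_of_bool.
exact: exchange_big.
Qed.

Lemma card_bigcup_le (I T : finType) (P : pred I) (A : I -> {set T}) :
  #|\bigcup_(i | P i) A i| <= \sum_(i | P i) #|A i|.
Proof.
elim/big_rec2: _ => [|i n U _ leUn]; first by rewrite cards0.
by rewrite (leq_trans (leq_card_setU (A i) U).1) ?leq_add2l.
Qed.

Lemma path_interior (T : eqType) (r : rel T) a p v :
  path r a p -> uniq (a :: p) -> v \in p -> v != last a p ->
  exists u z, [/\ u \in a :: p, z \in a :: p, u != z, r u v & r v z].
Proof.
move=> + + vp; case/splitPr: vp => p1 [|z p2]; first by rewrite last_cat eqxx.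
rewrite -cat_cons cat_path cat_uniq /= => /andP[_ /and3P[uv vz _]].
case/and3P=> _ /norP[_ /norP[zp1 _]] _ _.
exists (last a p1), z; split => //.
- by rewrite -cat_cons mem_cat mem_last.
- by rewrite -cat_cons mem_cat !inE eqxx !orbT.
- by apply: contraNneq zp1 => <-; rewrite mem_last.
Qed.

Section Forests.
Variable V : finType.
Implicit Types (F : {set {set V}}) (e : {set V}).

Definition deg F (v : V) := #|[set e in F | v \in e]|.

Lemma adjE_subset F F' : F \subset F' -> subrel (adjE F) (adjE F').
Proof. by move=> /subsetP sub x y; apply: sub. Qed.

Lemma acyclic_subset F F' : F \subset F' -> acyclic F' -> acyclic F.
Proof.
move=> sub acF' u p /andP[pp lp] up; apply: (acF' u p) _ up; rewrite /walk lp andbT.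
by apply: sub_path pp; apply: adjE_subset.
Qed.

Lemma is_graph_subset F F' : F \subset F' -> is_graph F' -> is_graph F.
Proof. by move=> /subsetP sub gF' e /sub /gF'. Qed.

Lemma graph_edge_pair F e x : is_graph F -> e \in F -> x \in e ->
  exists2 y, y != x & e = [set x; y].
Proof.
move=> gF /gF /eqP/cards2P[a [b [ab ->]]].
by rewrite !inE => /orP[]/eqP->; [exists b; rewrite 1?eq_sym | exists a; rewrite 1?setUC].
Qed.

Lemma adjE_neq F x y : is_graph F -> adjE F x y -> x != y.
Proof. by move=> gF /gF; rewrite cards2; case: (x != y). Qed.

Lemma acyclic_path_extend F x0 x1 p e :
  is_graph F -> acyclic F -> path (adjE F) x0 (x1 :: p) ->
  uniq (x0 :: x1 :: p) -> e \in F -> x0 \in e -> e != [set x0; x1] ->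
  exists2 y, adjE F y x0 & y \notin x0 :: x1 :: p.
Proof.
move=> gF acF pp up eF x0e ne.
have [y yx0 ey] := graph_edge_pair gF eF x0e.
have yx0E : adjE F y x0 by rewrite /adjE setUC -ey.
exists y => //; have yx1 : y != x1 by apply: contraNneq ne => yx1; rewrite ey yx1.
rewrite !inE (negbTE yx0) (negbTE yx1) /=; apply/negP => yp.
move: pp up; case/splitPr: yp => p1 p2.
rewrite -!cat_cons cat_path cat_uniq /= negb_or => /andP[p1P /andP[lp1y _]].
case/and3P=> /andP[x0n u1] /andP[yn _] _.
have cyc : walk F x0 x0 (x1 :: p1 ++ [:: y; x0]).
  by rewrite /walk -cat_cons cat_path last_cat /= p1P lp1y yx0E eqxx.
have ucyc : uniq (x1 :: p1 ++ [:: y; x0]).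
  move: yn; rewrite in_cons negb_or => /andP[_ yn].
  by rewrite -cat_cons cat_uniq /= u1 (negbTE yn) (negbTE x0n) inE yx0.
by have := acF _ _ cyc ucyc; rewrite /= size_cat addn2.
Qed.

(* Extend the simple path backwards from x0 until x0 is a leaf; this stops
   since a simple path has fewer than #|V| edges. *)
Lemma acyclic_leaf_of_path F n x0 p :
  is_graph F -> acyclic F -> #|V| - size p <= n ->
  path (adjE F) x0 p -> uniq (x0 :: p) -> p != [::] -> exists v, deg F v = 1.
Proof.
move=> gF acF; elim: n x0 p => [|n IH] x0 [//|x1 p] lim pp up _; rewrite /= in lim.
  have := max_card (mem (x0 :: x1 :: p)); rewrite (card_uniqP up) /=; lia.
have [/exists_inP[e eF /andP[x0e ne]] | /exists_inPn leaf] :=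
  boolP [exists e in F, (x0 \in e) && (e != [set x0; x1])].
  have [y yx0 yp] := acyclic_path_extend gF acF pp up eF x0e ne.
  apply: (IH y [:: x0, x1 & p]); rewrite /= ?yx0 ?yp //; lia.
exists x0; apply/eqP/cards1P; exists [set x0; x1]; apply/setP => e; rewrite !inE.
apply/andP/eqP => [[eF x0e] | ->]; last by rewrite !inE eqxx; case/andP: pp.
by apply/eqP; move: (leaf e eF); rewrite x0e negbK.
Qed.

Lemma acyclic_has_leaf F : is_graph F -> acyclic F -> F != set0 ->
  exists v, deg F v = 1.
Proof.
move=> gF acF /set0Pn[e eF]; have /eqP/cards2P[a [b [ab eab]]] := gF e eF.
apply: (@acyclic_leaf_of_path F #|V| a [:: b]) => //=.
- exact: leq_subr.
- by rewrite /adjE -eab eF.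
- by rewrite inE ab.
Qed.

Lemma acyclic_card_le_cover F : is_graph F -> acyclic F -> #|F| <= #|cover F|.
Proof.
have [m] := ubnP #|F|; elim: m F => // m IH F; rewrite ltnS => leFm gF acF.
have [-> | nF] := eqVneq F set0; first by rewrite cards0.
have [v /eqP/cards1P[e Fv]] := acyclic_has_leaf gF acF nF.
have := set11 e; rewrite -Fv inE => /andP[eF ve].
have sub : F :\ e \subset F := subD1set F e.
have coverD : cover (F :\ e) \subset cover F :\ v.
  apply/subsetP => x /bigcupP[e' /setD1P[e'e e'F] xe'].
  rewrite !inE; apply/andP; split; last by apply/bigcupP; exists e'.
  apply: contra e'e => /eqP xv; apply/eqP/set1P.
  by rewrite -Fv inE e'F -xv.
have vC : v \in cover F by apply/bigcupP; exists e.
rewrite (cardsD1 e F) (cardsD1 v (cover F)) eF vC !add1n ltnS.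
apply: leq_trans (subset_leq_card coverD).
apply: IH; [| exact: is_graph_subset sub gF | exact: acyclic_subset sub acF].
by move: leFm; rewrite (cardsD1 e F) eF.
Qed.

Lemma sum_deg F : is_graph F -> \sum_v deg F v = 2 * #|F|.
Proof.
move=> gF; rewrite [LHS](double_count predT) mulnC -sum_nat_const.
by apply: eq_bigr => e eF; rewrite -(gF e eF); apply: eq_card => v; rewrite inE.
Qed.

Lemma deg_gt0 F v : (0 < deg F v) = (v \in cover F).
Proof.
rewrite card_gt0; apply/set0Pn/bigcupP => [[e] | [e eF ve]].
  by rewrite inE => /andP[eF ve]; exists e.
by exists e; rewrite inE eF.
Qed.

Lemma forest_excess_deg F : is_graph F -> acyclic F ->
  \sum_v (deg F v - 2) <= #|[set v | deg F v == 1]|.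
Proof.
move=> gF acF.
have leFC := acyclic_card_le_cover gF acF.
have degC : \sum_v (0 < deg F v : nat) = #|cover F|.
  by rewrite (sum_nat_of_bool predT); apply: eq_card => v; rewrite inE /= deg_gt0.
have pointwise v : deg F v - 2 + 2 * (0 < deg F v) <= deg F v + (deg F v == 1).
  by case: (deg F v) => [|[|k]] //=; lia.
have := @leq_sum _ (index_enum V) xpredT _ _ (fun v _ => pointwise v).
have -> : #|[set v | deg F v == 1]| = \sum_v (deg F v == 1 : nat).
  by rewrite (sum_nat_of_bool predT).
rewrite !big_split /= big1_eq degC sum_deg //; lia.
Qed.

Local Open Scope ring_scope.

Lemma forest_high_deg (R : realDomainType) F (s : R) : is_graph F -> acyclic F ->
  #|[set v | s < (deg F v)%:R]|%:R * (s - 2) <= #|[set v | deg F v == 1%N]|%:R.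
Proof.
move=> gF acF; have [s2 | s2] := lerP 2 s; last first.
  by apply: le_trans (ler0n _ _); rewrite mulr_ge0_le0 ?ler0n // subr_le0 ltW.
set H := [set v | s < (deg F v)%:R].
have sumH : (\sum_(v in H) (deg F v - 2) <= \sum_v (deg F v - 2))%N.
  by rewrite [X in (_ <= X)%N](bigID [in H]) leq_addr.
apply: le_trans (_ : (\sum_(v in H) (deg F v - 2))%:R <= _); last first.
  by rewrite ler_nat (leq_trans sumH) // forest_excess_deg.
rewrite mulr_natl -sumr_const natr_sum ler_sum // => v; rewrite inE => sv.
rewrite natrB; last by rewrite -(ler_nat R) (le_trans s2) ?ltW.
by rewrite lerD2r ltW.
Qed.

End Forests.

Section Trunk.
Variables (V : finType) (S VT : {set V}) (ET : {set {set V}}).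
Hypotheses (gET : is_graph ET) (ET_VT : forall e, e \in ET -> e \subset VT).

Definition trunk_edges := [set e in ET | e \subset trunk S VT ET].

Lemma pdeg_trunk_edges v : pdeg S VT ET v = deg trunk_edges v.
Proof.
rewrite /pdeg /deg; case: ifPn => vT.
  by apply: eq_card => e; rewrite !inE; case: (e \in ET) => //=; apply: andbC.
apply/esym/eqP; rewrite cards_eq0; apply/eqP/setP => e; rewrite !inE.
by apply/negbTE; apply: contra vT => /andP[/andP[_ /subsetP eT] /eT].
Qed.

Lemma trunk_deg_ge2 v : v \in trunk S VT ET -> v \notin S ->
  2 <= deg trunk_edges v.
Proof.
rewrite inE => /andP[_ /asboolP[a [b [p [aS bS /andP[pp /eqP lp] up vp]]]]] vS.
have onT x y : x \in a :: p -> y \in a :: p -> [set x; y] \in ET ->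
    [set x; y] \subset trunk S VT ET.
  move=> xp yp /ET_VT/subsetP xyVT; rewrite subUset !sub1set !inE.
  rewrite !xyVT ?inE ?eqxx ?orbT //=.
  by apply/andP; split; apply/asboolP; exists a, b, p; rewrite /walk pp lp eqxx.
have vp' : v \in p.
  by move: vp; rewrite in_cons => /predU1P[va|//]; rewrite va aS in vS.
have vb : v != last a p by rewrite lp; apply: contraNneq vS => ->.
have [u [z [up' zp uz uv vz]]] := path_interior pp up vp' vb.
have ne : [set u; v] != [set v; z].
  apply: contraNneq uz => /setP/(_ u).
  by rewrite !inE eqxx (negbTE (adjE_neq gET uv)) /= => <-.
apply: leq_trans (subset_leq_card (_ : [set [set u; v]; [set v; z]] \subset _)).
  by rewrite cards2 ne.
rewrite subUset !sub1set !inE (uv : [set u; v] \in ET) (vz : [set v; z] \in ET).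
by rewrite !onT ?eqxx ?orbT.
Qed.

Lemma trunk_leaves_sub :
  [set v | deg trunk_edges v == 1] \subset [set u in S | u \in VT].
Proof.
apply/subsetP => v; rewrite !inE => /eqP deg1.
have /bigcupP[e] : v \in cover trunk_edges by rewrite -deg_gt0 deg1.
rewrite inE => /andP[_ /subsetP eT] /eT vT.
have := vT; rewrite inE => /andP[-> _]; rewrite andbT.
by apply/negPn/negP => /(trunk_deg_ge2 vT); rewrite deg1.
Qed.

Local Open Scope ring_scope.

Lemma trunk_high_pdeg (R : realDomainType) (s : R) : acyclic ET ->
  #|[set v | s < (pdeg S VT ET v)%:R]|%:R * (s - 2) <= #|[set u in S | u \in VT]|%:R.
Proof.
move=> acET; have sET : trunk_edges \subset ET.
  by apply/subsetP => e; rewrite inE => /andP[].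
have -> : [set v | s < (pdeg S VT ET v)%:R] = [set v | s < (deg trunk_edges v)%:R].
  by apply/setP => v; rewrite !inE pdeg_trunk_edges.
apply: le_trans (forest_high_deg _ (is_graph_subset sET gET) (acyclic_subset sET acET)) _.
by rewrite ler_nat subset_leq_card // trunk_leaves_sub.
Qed.

End Trunk.

Local Open Scope ring_scope.

Lemma card_Hi_le (R : realType) (V : finType) (E : {set {set V}}) (S : {set V})
    (VT : V -> {set V}) (ET : V -> {set {set V}}) (s : R) :
  is_graph E -> (forall w, w \in S -> rooted_subtree E (VT w) (ET w) w) ->
  #|Hi S VT ET s|%:R * (s - 2) <= \sum_(u in S) #|[set w in S | u \in VT w]|%:R.
Proof.
move=> gE trees; have [s2 | s2] := lerP 2 s; last first.
  apply: le_trans (sumr_ge0 _ (fun _ _ => ler0n _ _)).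
  by rewrite mulr_ge0_le0 ?ler0n // subr_le0 ltW.
pose Hw w := [set v | s < (pdeg S (VT w) (ET w) v)%:R].
have HiE : Hi S VT ET s = \bigcup_(w in S) Hw w.
  apply/setP => v; rewrite inE.
  by apply/exists_inP/bigcupP => -[w wS hv]; exists w; rewrite ?inE in hv *.
apply: le_trans (_ : \sum_(w in S) #|Hw w|%:R * (s - 2) <= _).
  by rewrite -mulr_suml -natr_sum ler_wpM2r ?subr_ge0 // ler_nat HiE card_bigcup_le.
rewrite -natr_sum -(double_count (mem S) (mem S) (fun w u => u \in VT w)).
rewrite natr_sum ler_sum // => w wS.
have [_ sE ET_VT _ acET] := trees w wS.
by have := trunk_high_pdeg S (is_graph_subset sE gE) ET_VT s acET.
Qed.

Lemma expR_le_inv1B (R : realType) (x : R) : x < 1 -> expR x <= (1 - x)^-1.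
Proof.
move=> x1; rewrite -[expR x]invrK lef_pV2 ?posrE ?invr_gt0 ?expR_gt0 ?subr_gt0 //.
by rewrite -expRN expR_ge1Dx.
Qed.

Lemma ln3_ge (R : realType) : 17/16 <= ln (3 : R).
Proof.
rewrite -[17/16 : R]expRK ler_ln ?posrE ?expR_gt0 //.
have -> : 17/16 = 17%:R * (16^-1 : R) by rewrite mulr_natl.
rewrite expRM_natl; apply: le_trans (_ : (16/15)^+17 <= 3); last by lra.
apply: lerXn2r; rewrite ?nnegrE ?expR_ge0 //.
apply: (le_trans (expR_le_inv1B _)); first by lra.
by rewrite (_ : 1 - 16^-1 = 15/16 :> R) ?invf_div //; lra.
Qed.

Lemma powR_inv_ln (R : realType) (a : R) : 0 < a -> ln a != 0 -> powR a (ln a)^-1 = expR 1.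
Proof. by move=> a0 lna0; rewrite /powR gt_eqF // mulVf. Qed.

Lemma powR_ge4 (R : realType) (d : nat) (c : R) : (2 <= d)%N -> 1 <= c ->
  4 <= powR d%:R (c + 1).
Proof.
move=> d2 c1; have d2R : 2 <= d%:R :> R by rewrite ler_nat.
apply: le_trans (_ : powR d%:R 2 <= _); first by rewrite powR_mulrn ?expr2; nra.
by rewrite ler_powR //; lra.
Qed.

Lemma load_threshold_gap (R : realType) (k D : R) : 17/16 <= k -> 4 <= D ->
  k * expR 1 * (k + 1) * (2 * D) <= 4 * expR 1 * D * k ^+ 2 + 1 - 2.
Proof.
move=> k_ge D4; have e2 : 2 <= expR 1 :> R by have := expR_ge1Dx (1 : R); lra.
have kk : 17/256 <= k * (k - 1) by nra.
have eD : 8 <= expR 1 * D by nra.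
nra.
Qed.

Lemma ler_div_ratio (R : realFieldType) (x y a b t : R) : 0 < a -> 0 < b -> 0 <= y ->
  x * t <= y * a -> a * b <= t -> x <= y / b.
Proof.
move=> a0 b0 y0 xy ab; have t0 : 0 < t by apply: lt_le_trans ab; rewrite mulr_gt0.
rewrite ler_pdivlMr //; nra.
Qed.

Theorem lemma2p4 (R : realType) (V : finType) (E : {set {set V}})
    (wt : {set V} -> R) (d : nat) (c : R)
    (S : {set V}) (VT : V -> {set V}) (ET : V -> {set {set V}}) :
  (3 <= #|V|)%N ->
  is_graph E -> pos_weights E wt ->
  (2 <= d)%N -> 1 <= c ->
  restricted_tree_cover E wt S VT ET ->
  let n := #|V|%:R : R in
  let s := 4 * expR 1 * powR d%:R (c + 1) * ln n ^+ 2 + 1 in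
  (#|Hi S VT ET s|%:R : R) <= #|S|%:R / (2 * powR d%:R (c + 1)).
Proof.
move=> V3 gE _ d2 c1 [trees _ load]; cbv zeta.
set n := #|V|%:R : R in load *.
have n3 : 3 <= n by rewrite /n ler_nat.
have k_ge : 17/16 <= ln n.
  by apply: le_trans (ln3_ge R) _; rewrite ler_ln ?posrE //; lra.
have load_e u : #|[set w in S | u \in VT w]|%:R <= ln n * expR 1 * (ln n + 1).
  by rewrite -(@powR_inv_ln _ n) ?gt_eqF ?load //; lra.
apply: ler_div_ratio (load_threshold_gap k_ge (powR_ge4 d2 c1)).
- by rewrite !mulr_gt0 ?expR_gt0 //; lra.
- by rewrite mulr_gt0 // (lt_le_trans _ (powR_ge4 d2 c1)).
- exact: ler0n.
apply: le_trans (card_Hi_le _ gE trees) _.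
by rewrite mulr_natl -sumr_const; apply: ler_sum => u _; apply: load_e.
Qed.
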